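(* Let $\mathcal{N}=(N,M_0)$ be a two-level PT-net system with transitions partitioned into low-level $L$ and high-level $H$. Then $\mathcal{N}$ has the property SBNDC if and only if $P(h,l)$ holds for every $h\in H$ and every $l\in L$.
   Context: A PT-net is $N=(P,T,F)$ with $P,T$ finite disjoint and $F:(P\times T)\cup(T\times P)\to\mathbb{N}$; markings $M:P\to\mathbb{N}$; $t$ enabled at $M$ ($M[t\rangle$) iff $M(p)\ge F(p,t)$ for all $p$, firing gives $M'(p)=M(p)+F(t,p)-F(p,t)$ ($M[t\rangle M'$); extended to sequences. Reachable markings are those $M$ with $M_0[s\rangle M$. $N\setminus H$ deletes the transitions of $H$. Two net systems all of whose transitions are observable are weakly bisimilar if there is a relation $R$ between their reachable markings containing the initial pair such that for $(M,M')\in R$ each step $M[t\rangle M''$ is matched by $M'[t\rangle M'''$ with $(M'',M''')\in R$, and symmetrically. SBNDC: for every reachable marking $M_1$ of $\mathcal{N}$ and every $h\in H$, $M_1[h\rangle M_2$ implies that $(N\setminus H,M_1)$ and $(N\setminus H,M_2)$ are weakly bisimilar. For $h\in H$, $l\in L$, $P(h,l)$ holds iff for all words $s\in L^*$ and $w\in(L\cup H)^*$: if $M_0[w\rangle M_1$, $M_1[h\rangle M_2$, $M_1[s\rangle M_3$ and $M_2[s\rangle M_4$, then $M_3[l\rangle$ iff $M_4[l\rangle$. *)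

From mathcomp Require Import all_boot.
Set Implicit Arguments. Unset Strict Implicit. Unset Printing Implicit Defensive.

(* A PT-net N = (P, T, F): P and T are finite types (hence disjoint), and the
   flow function F is split into F(p,t) = pre p t and F(t,p) = post t p. *)
Record ptnet (P T : finType) := PTNet {
  pre  : P -> T -> nat;
  post : T -> P -> nat
}.

Definition marking (P : finType) := P -> nat.

Section Nets.
Variables (P T : finType) (N : ptnet P T).

Definition enabled (M : marking P) (t : T) : Prop :=
  forall p, pre N p t <= M p.

Definition fire (M : marking P) (t : T) (M' : marking P) : Prop :=
  enabled M t /\ forall p, M' p = M p + post N t p - pre N p t.

Inductive fire_seq : marking P -> seq T -> marking P -> Prop :=
| fs_nil M : fire_seq M [::] M
| fs_cons M t M1 s M2 : fire M t M1 -> fire_seq M1 s M2 -> fire_seq M (t :: s) M2.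

(* two-level net: isH t = t is a high-level transition (t \in H);
   the low-level transitions are L = ~~ isH. *)
Variable isH : pred T.

Definition low_word (s : seq T) : bool := all (fun t => ~~ isH t) s.

(* reachable markings of the system (N \ H, M1): only low transitions fire *)
Definition reach_low (M1 M : marking P) : Prop :=
  exists s, low_word s /\ fire_seq M1 s M.

(* weak bisimilarity of (N \ H, M1) and (N \ H, M2); all transitions of
   N \ H (i.e. those of L) are observable. *)
Definition weak_bisim_low (M1 M2 : marking P) : Prop :=
  exists R : marking P -> marking P -> Prop,
    R M1 M2 /\
    (forall M M', R M M' -> reach_low M1 M /\ reach_low M2 M') /\
    (forall M M', R M M' -> forall t M'', ~~ isH t -> fire M t M'' ->
        exists M''', fire M' t M''' /\ R M'' M''') /\
    (forall M M', R M M' -> forall t M''', ~~ isH t -> fire M' t M''' ->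
        exists M'', fire M t M'' /\ R M'' M''').

Definition SBNDC (M0 : marking P) : Prop :=
  forall M1, (exists w, fire_seq M0 w M1) ->
  forall h M2, isH h -> fire M1 h M2 -> weak_bisim_low M1 M2.

Definition Phl (M0 : marking P) (h l : T) : Prop :=
  forall (s w : seq T) (M1 M2 M3 M4 : marking P),
    low_word s ->
    fire_seq M0 w M1 -> fire M1 h M2 ->
    fire_seq M1 s M3 -> fire_seq M2 s M4 ->
    (enabled M3 l <-> enabled M4 l).

End Nets.

From mathcomp Require Import all_boot.
From Stdlib Require Import FunctionalExtensionality.
Set Implicit Arguments.
Unset Strict Implicit.

(* Firing is deterministic, so a low word fired from M1 and from M2 pairs up
   exactly one marking on each side.  A weak bisimulation must relate these
   pairs, hence it forces them to enable the same low transitions; conversely,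
   if these pairs always enable the same low transitions, the relation
   "reached from M1 and M2 by the same low word" is itself a weak bisimulation. *)

Section Firing.
Variables (P T : finType) (N : ptnet P T).

Lemma fire_det (M : marking P) t M1 M2 :
  fire N M t M1 -> fire N M t M2 -> M1 = M2.
Proof.
move=> [_ eq1] [_ eq2]; apply: functional_extensionality => p.
by rewrite eq1 eq2.
Qed.

Lemma enabled_fire (M : marking P) t :
  enabled N M t -> exists M', fire N M t M'.
Proof. by move=> en; exists (fun p => M p + post N t p - pre N p t). Qed.

Lemma fire_seq_det (M : marking P) s M1 M2 :
  fire_seq N M s M1 -> fire_seq N M s M2 -> M1 = M2.
Proof.
move=> fs1; elim: fs1 M2 => [M' | M' t Mt s' M1' ft _ IH] M2 fs2.
  by inversion fs2.
inversion fs2 as [|? ? Mt' ? ? ft' fs2']; subst.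
by rewrite (fire_det ft ft') in IH; apply: IH.
Qed.

Lemma fire_seq_rcons (M : marking P) s M1 t M2 :
  fire_seq N M s M1 -> fire N M1 t M2 -> fire_seq N M (rcons s t) M2.
Proof.
elim=> [M' | M' t' Mt s' M1' ft _ IH] ft2 /=.
  exact: fs_cons ft2 (fs_nil _ _).
exact: fs_cons ft (IH ft2).
Qed.

Variable isH : pred T.

Lemma low_word_rcons s t :
  low_word isH (rcons s t) = low_word isH s && ~~ isH t.
Proof. by rewrite /low_word all_rcons andbC. Qed.

Lemma simulation_fire_seq (R : marking P -> marking P -> Prop) s M M' X :
  (forall M M', R M M' -> forall t M'', ~~ isH t -> fire N M t M'' ->
     exists M''', fire N M' t M''' /\ R M'' M''') ->
  low_word isH s -> R M M' -> fire_seq N M s X ->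
  exists Y, fire_seq N M' s Y /\ R X Y.
Proof.
move=> sim; elim: s M M' X => [|t s IH] M M' X /= low RMM' fs.
  by inversion fs; subst; exists M'; split => //; constructor.
inversion fs as [|? ? Mt ? ? ft fs']; subst.
case/andP: low => lt low.
have [Mt' [ft' RMt]] := sim _ _ RMM' _ _ lt ft.
have [Y [fsY RXY]] := IH _ _ _ low RMt fs'.
by exists Y; split => //; exact: fs_cons ft' fsY.
Qed.

Lemma weak_bisim_low_enabled (M1 M2 : marking P) s M3 M4 l :
  weak_bisim_low N isH M1 M2 -> low_word isH s -> ~~ isH l ->
  fire_seq N M1 s M3 -> fire_seq N M2 s M4 ->
  enabled N M3 l <-> enabled N M4 l.
Proof.
move=> [R [RM12 [_ [fwd bwd]]]] low ll fs3 fs4.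
have [Y [fsY RM3Y]] := simulation_fire_seq fwd low RM12 fs3.
rewrite -(fire_seq_det fsY fs4); split=> /enabled_fire [M' fM'].
- by have [? [[]]] := fwd _ _ RM3Y _ _ ll fM'.
- by have [? [[]]] := bwd _ _ RM3Y _ _ ll fM'.
Qed.

Definition co_reach_low (M1 M2 M M' : marking P) : Prop :=
  exists s, low_word isH s /\ fire_seq N M1 s M /\ fire_seq N M2 s M'.

Lemma co_reach_lowC (M1 M2 M M' : marking P) :
  co_reach_low M1 M2 M M' -> co_reach_low M2 M1 M' M.
Proof. by move=> [s [low [fs1 fs2]]]; exists s. Qed.

Lemma co_reach_low_fire (M1 M2 M M' M'' : marking P) t :
  co_reach_low M1 M2 M M' -> ~~ isH t -> fire N M t M'' -> enabled N M' t ->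
  exists M''', fire N M' t M''' /\ co_reach_low M1 M2 M'' M'''.
Proof.
move=> [s [low [fs1 fs2]]] lt ft /enabled_fire [M''' ft'].
exists M'''; split => //; exists (rcons s t).
rewrite low_word_rcons low lt.
by split=> //; split; [exact: fire_seq_rcons fs1 ft | exact: fire_seq_rcons fs2 ft'].
Qed.

Lemma weak_bisim_low_of_enabled (M1 M2 : marking P) :
  (forall s M3 M4 l, low_word isH s -> ~~ isH l ->
     fire_seq N M1 s M3 -> fire_seq N M2 s M4 ->
     enabled N M3 l <-> enabled N M4 l) ->
  weak_bisim_low N isH M1 M2.
Proof.
move=> agree; exists (co_reach_low M1 M2); split.
  by exists [::]; split; last split; constructor.
split; first by move=> M M' [s [low [fs1 fs2]]]; split; exists s.
have agreeR M M' t : co_reach_low M1 M2 M M' -> ~~ isH t ->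
    enabled N M t <-> enabled N M' t.
  by move=> [s [low [fs1 fs2]]] lt; exact: agree low lt fs1 fs2.
split.
- move=> M M' RMM' t M'' lt ft.
  apply: (co_reach_low_fire RMM' lt ft).
  by apply/(agreeR _ _ _ RMM' lt); case: ft.
- move=> M M' RMM' t M''' lt ft.
  have en : enabled N M t by apply/(agreeR _ _ _ RMM' lt); case: ft.
  have [M'' [ft' R'']] := co_reach_low_fire (co_reach_lowC RMM') lt ft en.
  by exists M''; split=> //; exact: co_reach_lowC.
Qed.

End Firing.

Theorem proposition6 (P T : finType) (N : ptnet P T) (isH : pred T)
    (M0 : marking P) :
  SBNDC N isH M0 <->
  (forall h l : T, isH h -> ~~ isH l -> Phl N isH M0 h l).
Proof.
split.
- move=> sbndc h l hH lL s w M1 M2 M3 M4 low fsw fh.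
  exact: weak_bisim_low_enabled (sbndc M1 (ex_intro _ w fsw) h M2 hH fh) low lL.
- move=> Phl_all M1 [w fsw] h M2 hH fh.
  apply: weak_bisim_low_of_enabled => s M3 M4 l low lL.
  exact: Phl_all h l hH lL s w M1 M2 M3 M4 low fsw fh.
Qed.
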